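(* Let $(c(t))_{t\in\mathbb{R}}$ be a bounded complex-valued cosine function (i.e. $c:\mathbb{R}\to\mathbb{C}$ bounded with $c(0)=1$ and $c(s+t)+c(s-t)=2c(s)c(t)$ for all $s,t\in\mathbb{R}$) which is discontinuous. Then for every $\alpha\in[-1,1]$ there exists a sequence $(t_n)_{n\ge1}$ of positive real numbers such that $\lim_{n\to\infty}t_n=0$ and $\lim_{n\to\infty}c(t_n)=\alpha$. *)

From Stdlib Require Import Reals.
From Coquelicot Require Export Coquelicot.
Open Scope R_scope.

Definition cosine_function (c : R -> C) : Prop :=
  c 0 = 1%C /\
  forall s t : R, Cplus (c (s + t)) (c (s - t)) = Cmult (RtoC 2) (Cmult (c s) (c t)).

Definition bounded_fun (c : R -> C) : Prop :=
  exists M : R, forall t : R, Cmod (c t) <= M.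

(* Writing z = c(t), d'Alembert's equation gives c(2t) = 2z^2 - 1, and the focal sum
   |z - 1| + |z + 1| of the ellipse through z with foci -1, 1 turns this map into x |-> x^2 - 2.
   Since the focal sum is at least 2, with equality exactly on [-1, 1], boundedness of c forces
   c to be real with values in [-1, 1].

   For such a real cosine function r, the angles a for which cos a is a cluster value of r at 0
   form a closed subgroup of R containing 2 PI; Chebyshev's identity r(nt) = cos(n th) whenever
   r(t) = cos th makes it divisible as well. Discontinuity of r yields an angle with cos a < 1,
   which rules out the cyclic subgroups (2 PI / m) Z, so every a >= 0 is an angle. Hence every
   alpha in [-1, 1] is a cluster value of r at 0, approached along positive t since r is even. *)

From Stdlib Require Import Reals Lra Lia Psatz Classical ClassicalEpsilon.
From Coquelicot Require Import Coquelicot.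
Open Scope R_scope.

Lemma cos_lipschitz (a b : R) : Rabs (cos a - cos b) <= Rabs (a - b).
Proof.
  destruct (MVT_abs cos (fun x => - sin x) b a) as [z [-> _]].
  { intros z _. apply derivable_pt_lim_cos. }
  rewrite Rabs_Ropp. pose proof (SIN_bound z).
  assert (Rabs (sin z) <= 1) by (apply Rabs_le; lra).
  pose proof (Rabs_pos (a - b)). nra.
Qed.

Lemma cos_Rabs (a : R) : cos (Rabs a) = cos a.
Proof. unfold Rabs. destruct Rcase_abs; [apply cos_neg|reflexivity]. Qed.

Lemma cos_nat_mul_2PI (k : nat) : cos (INR k * (2 * PI)) = 1.
Proof.
  rewrite <- cos_0, <- (cos_period 0 k). f_equal. ring.
Qed.

Lemma inv_succ_pos (n : nat) : 0 < / (INR n + 1).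
Proof. apply Rinv_0_lt_compat. pose proof (pos_INR n). lra. Qed.

Lemma inv_succ_small (e : R) : 0 < e ->
  exists N : nat, forall n, (N <= n)%nat -> / (INR n + 1) < e.
Proof.
  intros He. destruct (archimed_cor1 e He) as [N [HN HN0]].
  exists N. intros n Hn. eapply Rle_lt_trans; [|exact HN].
  apply Rinv_le_contravar; [apply lt_0_INR; lia|].
  apply le_INR in Hn. lra.
Qed.

Lemma ball_R (a b : R) (e : posreal) : ball a e b <-> Rabs (b - a) < e.
Proof. reflexivity. Qed.

Lemma filterlim_RtoC {T : Type} (F : (T -> Prop) -> Prop) (f : T -> R) (y : R) :
  Filter F -> filterlim f F (locally y) -> filterlim (fun x => RtoC (f x)) F (locally (RtoC y)).
Proof.
  intros HF Hf. apply filterlim_locally. intros e.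
  apply (filter_imp (fun x => ball y e (f x))); [|exact (proj1 (filterlim_locally f y) Hf e)].
  intros x Hx. split; [exact Hx|]. apply ball_center.
Qed.

Lemma Rabs_mul_lt_sqr_cases (x A B e : R) : 0 < e -> Rabs ((x - A) * (x - B)) < e * e ->
  Rabs (x - A) < e \/ Rabs (x - B) < e.
Proof.
  intros He H. rewrite Rabs_mult in H.
  destruct (Rlt_or_le (Rabs (x - A)) e) as [|HA]; [now left|].
  destruct (Rlt_or_le (Rabs (x - B)) e) as [|HB]; [now right|].
  pose proof (Rmult_le_compat _ _ _ _ (Rlt_le _ _ He) (Rlt_le _ _ He) HA HB). lra.
Qed.

Lemma cluster_point_of_bounded (u : nat -> R) (a b : R) : (forall k, a <= u k <= b) ->
  exists l, a <= l <= b /\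
    forall e, 0 < e -> forall N, exists p, (N <= p)%nat /\ Rabs (u p - l) < e.
Proof.
  intros Hu.
  destruct (Bolzano_Weierstrass u _ (compact_P3 a b) Hu) as [l Hl].
  assert (Hl' : forall e, 0 < e -> forall N, exists p, (N <= p)%nat /\ Rabs (u p - l) < e).
  { intros e He N. destruct (Hl (disc l (mkposreal e He)) N) as [p Hp]; [|now exists p].
    exists (mkposreal e He). now intros y Hy. }
  exists l. split; [|exact Hl'].
  split; apply Rnot_lt_le; intros Hlt.
  - destruct (Hl' (a - l) ltac:(lra) 0%nat) as [p [_ Hp]].
    specialize (Hu p). apply Rabs_def2 in Hp. lra.
  - destruct (Hl' (l - b) ltac:(lra) 0%nat) as [p [_ Hp]].
    specialize (Hu p). apply Rabs_def2 in Hp. lra.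
Qed.

Lemma quadratic_perturbation (x u v u' v' e : R) :
  Rabs x <= 1 -> Rabs u <= 1 -> Rabs v <= 1 -> Rabs u' <= 1 -> Rabs v' <= 1 ->
  Rabs (u' - u) <= e -> Rabs (v' - v) <= e ->
  Rabs ((- 2 * u' * v' * x + u' ^ 2 + v' ^ 2) - (- 2 * u * v * x + u ^ 2 + v ^ 2)) <= 8 * e.
Proof.
  intros Hx Hu Hv Hu' Hv' Hdu Hdv.
  replace ((- 2 * u' * v' * x + u' ^ 2 + v' ^ 2) - (- 2 * u * v * x + u ^ 2 + v ^ 2))
    with ((- 2 * x * u') * (v' - v) + (- 2 * x * v) * (u' - u)
          + (u' + u) * (u' - u) + (v' + v) * (v' - v)) by ring.
  assert (Hterm : forall p q, Rabs p <= 2 -> Rabs q <= e -> Rabs (p * q) <= 2 * e).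
  { intros p q Hp Hq. rewrite Rabs_mult. pose proof (Rabs_pos p). pose proof (Rabs_pos q). nra. }
  assert (H2 : forall p q, Rabs p <= 1 -> Rabs q <= 1 -> Rabs (- 2 * p * q) <= 2).
  { intros p q Hp Hq. rewrite !Rabs_mult, (Rabs_left (-2)) by lra.
    pose proof (Rabs_pos p). pose proof (Rabs_pos q). nra. }
  assert (Hs : forall p q, Rabs p <= 1 -> Rabs q <= 1 -> Rabs (p + q) <= 2).
  { intros p q Hp Hq. pose proof (Rabs_triang p q). lra. }
  pose proof (Rabs_triang ((- 2 * x * u') * (v' - v) + (- 2 * x * v) * (u' - u)
          + (u' + u) * (u' - u)) ((v' + v) * (v' - v))).
  pose proof (Rabs_triang ((- 2 * x * u') * (v' - v) + (- 2 * x * v) * (u' - u))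
          ((u' + u) * (u' - u))).
  pose proof (Rabs_triang ((- 2 * x * u') * (v' - v)) ((- 2 * x * v) * (u' - u))).
  pose proof (Hterm _ _ (H2 _ _ Hx Hu') Hdv). pose proof (Hterm _ _ (H2 _ _ Hx Hv) Hdu).
  pose proof (Hterm _ _ (Hs _ _ Hu' Hu) Hdu). pose proof (Hterm _ _ (Hs _ _ Hv' Hv) Hdv).
  lra.
Qed.

Definition focal_sum (z : C) : R := Cmod (z - 1) + Cmod (z + 1).

Lemma focal_sum_ge2 (z : C) : 2 <= focal_sum z.
Proof.
  unfold focal_sum. rewrite <- (Cmod_opp (z - 1)).
  replace 2 with (Cmod (- (z - 1) + (z + 1))).
  - apply Cmod_triangle.
  - replace (- (z - 1) + (z + 1))%C with (RtoC 2) by ring.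
    rewrite Cmod_R, Rabs_pos_eq; lra.
Qed.

Lemma focal_sum_le (z : C) : focal_sum z <= 2 * Cmod z + 2.
Proof.
  unfold focal_sum. unfold Cminus.
  pose proof (Cmod_triangle z (- (1))). pose proof (Cmod_triangle z 1).
  rewrite Cmod_opp, Cmod_1 in *. lra.
Qed.

Lemma focal_sum_double (z : C) : focal_sum (2 * z * z - 1) = focal_sum z ^ 2 - 2.
Proof.
  unfold focal_sum.
  replace (2 * z * z - 1 - 1)%C with (2 * ((z - 1) * (z + 1)))%C by ring.
  replace (2 * z * z - 1 + 1)%C with (2 * (z * z))%C by ring.
  rewrite !Cmod_mult, Cmod_R, Rabs_pos_eq by lra.
  pose proof (Cmod2_alt z) as Ez. pose proof (Cmod2_alt (z - 1)) as Em.
  pose proof (Cmod2_alt (z + 1)) as Ep.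
  destruct z as [x y]. simpl in Ez, Em, Ep. nra.
Qed.

Lemma focal_sum_eq2 (z : C) : focal_sum z = 2 -> Im z = 0 /\ -1 <= Re z <= 1.
Proof.
  unfold focal_sum. intros H.
  pose proof (Cmod_ge_0 (z - 1)). pose proof (Cmod_ge_0 (z + 1)).
  pose proof (Cmod2_alt (z - 1)) as Em. pose proof (Cmod2_alt (z + 1)) as Ep.
  destruct z as [x y]. simpl in *.
  assert (Cmod ((x, y) - 1) = 1 - x) by nra.
  split; nra.
Qed.

Lemma doubling_bounded_eq0 (F : R -> R) (M : R) :
  (forall t, 0 <= F t) -> (forall t, F t <= M) -> (forall t, 2 * F t <= F (t + t)) ->
  forall t, F t = 0.
Proof.
  intros F_ge0 F_le F_double.
  assert (Hn : forall n t, (INR n + 1) * F t <= M).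
  { induction n as [|n IH]; intros t; simpl.
    - rewrite Rplus_0_l, Rmult_1_l. apply F_le.
    - specialize (IH (t + t)). specialize (F_double t). specialize (F_ge0 t).
      pose proof (pos_INR n). destruct n; nra. }
  intros t. apply Rle_antisym; [|apply F_ge0].
  destruct (F_ge0 t) as [Hpos|]; [|lra].
  destruct (INR_unbounded (M / F t)) as [n Hn'].
  specialize (Hn n t).
  apply (Rmult_gt_compat_r (F t)) in Hn'; [|exact Hpos].
  unfold Rdiv in Hn'. rewrite Rmult_assoc, Rinv_l in Hn' by lra. lra.
Qed.

Lemma bounded_cosine_real (c : R -> C) : cosine_function c -> bounded_fun c ->
  forall t, Im (c t) = 0 /\ -1 <= Re (c t) <= 1.
Proof.
  intros [c0 c_add_sub] [M c_le].
  assert (c_double : forall t, c (t + t) = (2 * c t * c t - 1)%C).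
  { intros t. pose proof (c_add_sub t t) as E. rewrite Rminus_eq_0, c0 in E.
    replace (c (t + t)) with (c (t + t)%R + 1 - 1)%C by ring. rewrite E. ring. }
  intros t. apply focal_sum_eq2.
  enough (focal_sum (c t) - 2 = 0) by lra. revert t.
  apply (doubling_bounded_eq0 _ (2 * M)); intros t.
  - pose proof (focal_sum_ge2 (c t)). lra.
  - pose proof (focal_sum_le (c t)). pose proof (c_le t). lra.
  - rewrite c_double, focal_sum_double. pose proof (focal_sum_ge2 (c t)). nra.
Qed.

Lemma floor_mul (x g : R) : 0 <= x -> 0 < g ->
  exists k : nat, INR k * g <= x < (INR k + 1) * g.
Proof.
  intros Hx Hg. destruct (archimed (x / g)) as [Hup_gt Hup_le].
  assert (Hxg : 0 <= x / g) by (apply Rdiv_le_0_compat; lra).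
  assert (Hup : (0 < up (x / g))%Z) by (apply lt_IZR; simpl; lra).
  exists (Z.to_nat (up (x / g) - 1)).
  rewrite INR_IZR_INZ, Znat.Z2Nat.id, minus_IZR by lia. simpl.
  assert (x = x / g * g) by (field; lra).
  split; nra.
Qed.

Section ClosedSubgroup.

Variable G : R -> Prop.
Hypothesis G0 : G 0.
Hypothesis G_opp : forall a, G a -> G (- a).
Hypothesis G_add : forall a b, G a -> G b -> G (a + b).
Hypothesis G_closed :
  forall a, (forall e, 0 < e -> exists x, G x /\ Rabs (x - a) < e) -> G a.

Lemma subgroup_sub a b : G a -> G b -> G (a - b).
Proof. intros. apply G_add; auto. Qed.

Lemma subgroup_nat_mul a (k : nat) : G a -> G (INR k * a).
Proof.
  intros Ga. induction k as [|k IH].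
  - simpl. rewrite Rmult_0_l. exact G0.
  - rewrite S_INR, Rmult_plus_distr_r, Rmult_1_l. auto.
Qed.

Lemma subgroup_abs a : G a -> G (Rabs a).
Proof. intros. unfold Rabs. destruct Rcase_abs; auto. Qed.

Lemma subgroup_cyclic_of_gap gam : 0 < gam ->
  (forall x, G x -> 0 < x -> gam <= x) -> (exists x, G x /\ 0 < x) ->
  exists g, 0 < g /\ G g /\ forall x, G x -> 0 <= x -> exists k : nat, x = INR k * g.
Proof.
  intros Hgam gap [x0 [Gx0 Px0]].
  (* g is the infimum of the positive elements, obtained as minus a supremum *)
  set (E := fun y => G (- y) /\ 0 < - y).
  destruct (completeness E) as [l [Hub Hlub]].
  { exists (- gam). intros y [Gy Py]. specialize (gap _ Gy Py). lra. }
  { exists (- x0). unfold E. rewrite Ropp_involutive. auto. }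
  set (g := - l).
  assert (g_le : forall x, G x -> 0 < x -> g <= x).
  { intros x Gx Px. assert (Ex : E (- x)) by (unfold E; rewrite Ropp_involutive; auto).
    specialize (Hub _ Ex). unfold g. lra. }
  assert (g_approx : forall e, 0 < e -> exists x, G x /\ 0 < x < g + e).
  { intros e He. apply NNPP. intros Hno.
    enough (l <= - (g + e)) by (unfold g in *; lra).
    apply Hlub. intros y [Gy Py]. apply Rnot_lt_le. intros Hy.
    apply Hno. exists (- y). split; auto. lra. }
  assert (gam_le_g : gam <= g).
  { enough (l <= - gam) by (unfold g; lra).
    apply Hlub. intros y [Gy Py]. specialize (gap _ Gy Py). lra. }
  assert (Gg : G g).
  { apply G_closed. intros e He. destruct (g_approx e He) as [x [Gx Hx]].
    exists x. split; [exact Gx|]. pose proof (g_le x Gx (proj1 Hx)).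
    rewrite Rabs_pos_eq; lra. }
  exists g. repeat split; [lra|exact Gg|].
  intros x Gx Px. destruct (floor_mul x g Px) as [k [Hk1 Hk2]]; [lra|].
  exists k.
  assert (Gy : G (x - INR k * g)) by (apply subgroup_sub, subgroup_nat_mul; auto).
  specialize (g_le _ Gy). lra.
Qed.

Lemma subgroup_dense_nonneg :
  (forall gam, 0 < gam -> exists x, G x /\ 0 < x < gam) -> forall b, 0 <= b -> G b.
Proof.
  intros dense b Hb. apply G_closed. intros e He.
  destruct (dense e He) as [x [Gx Hx]].
  destruct (floor_mul b x Hb (proj1 Hx)) as [k Hk].
  exists (INR k * x). split; [apply subgroup_nat_mul; auto|].
  rewrite Rabs_left1; lra.
Qed.

End ClosedSubgroup.

Section BoundedRealCosine.

Variable r : R -> R.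
Hypothesis r0 : r 0 = 1.
Hypothesis r_add_sub : forall s t, r (s + t) + r (s - t) = 2 * r s * r t.
Hypothesis r_bound : forall t, -1 <= r t <= 1.

Lemma r_even t : r (- t) = r t.
Proof. pose proof (r_add_sub 0 t) as E. rewrite Rplus_0_l, Rminus_0_l, r0 in E. lra. Qed.

Lemma r_Rabs t : r (Rabs t) = r t.
Proof. unfold Rabs. destruct Rcase_abs; [apply r_even|reflexivity]. Qed.

Lemma r_mul_add_sub s t : r (s + t) * r (s - t) = r s ^ 2 + r t ^ 2 - 1.
Proof.
  pose proof (r_add_sub (s + t) (s - t)) as E.
  replace (s + t + (s - t)) with (s + s) in E by ring.
  replace (s + t - (s - t)) with (t + t) in E by ring.
  pose proof (r_add_sub s s). pose proof (r_add_sub t t).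
  rewrite Rminus_eq_0, r0 in *. nra.
Qed.

Lemma r_chebyshev t th : r t = cos th -> forall n : nat, r (INR n * t) = cos (INR n * th).
Proof.
  intros Ht n.
  enough (r (INR n * t) = cos (INR n * th) /\ r (INR (S n) * t) = cos (INR (S n) * th))
    by tauto.
  induction n as [|n [IH IHS]].
  - simpl. rewrite !Rmult_0_l, !Rmult_1_l, r0, cos_0. auto.
  - split; [exact IHS|].
    pose proof (r_add_sub (INR (S n) * t) t) as E.
    pose proof (cos_plus (INR (S n) * th) th) as Cp.
    pose proof (cos_minus (INR (S n) * th) th) as Cm.
    assert (Hprev : forall u, INR (S n) * u - u = INR n * u) by (intros; rewrite S_INR; ring).
    assert (Hnext : forall u, INR (S n) * u + u = INR (S (S n)) * u)
      by (intros; rewrite (S_INR (S n)); ring).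
    rewrite Hprev in E, Cm. rewrite Hnext in E, Cp.
    rewrite IH, IHS, Ht in E. lra.
Qed.

Lemma r_continuous :
  (forall e, 0 < e -> exists d, 0 < d /\ forall h, Rabs h < d -> 1 - e < r h) ->
  forall x, continuous r x.
Proof.
  intros Hnear0 x. apply filterlim_locally. intros eps.
  set (e := Rmin (eps / 2) (eps * eps / 8)).
  assert (He : 0 < e) by (apply Rmin_glb_lt; pose proof (cond_pos eps); nra).
  pose proof (Rmin_l (eps / 2) (eps * eps / 8)) as He_half.
  pose proof (Rmin_r (eps / 2) (eps * eps / 8)) as He_sqr.
  fold e in He_half, He_sqr. pose proof (cond_pos eps).
  destruct (Hnear0 e He) as [d [Hd Hrh]]. exists (mkposreal d Hd). intros y Hy.
  change R in x, y.
  rewrite ball_R in *. simpl in Hy. specialize (Hrh (y - x) Hy).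
  replace y with (x + (y - x)) by ring. set (h := y - x) in *.
  (* r(x+h) - r(x) = r(x) (r(h) - 1) + D / 2, and both terms are controlled by 1 - r(h) *)
  set (D := r (x + h) - r (x - h)).
  assert (HD : D * D = 4 * ((1 - r x) * (1 + r x)) * ((1 - r h) * (1 + r h))).
  { replace (D * D) with ((r (x + h) + r (x - h)) ^ 2 - 4 * (r (x + h) * r (x - h)))
      by (unfold D; ring).
    rewrite r_add_sub, r_mul_add_sub. ring. }
  pose proof (r_bound x). pose proof (r_bound h).
  assert (HDeps : Rabs D < eps).
  { assert (0 <= (1 - r x) * (1 + r x) <= 1) by (split; nra).
    assert (0 <= (1 - r h) * (1 + r h) <= 2 * (1 - r h)) by (split; nra).
    apply Rabs_def1; nra. }
  replace (r (x + h) - r x) with (r x * (r h - 1) + D / 2)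
    by (pose proof (r_add_sub x h); unfold D; lra).
  eapply Rle_lt_trans; [apply Rabs_triang|].
  rewrite Rabs_mult. unfold Rdiv. rewrite Rabs_mult, Rabs_inv, (Rabs_pos_eq 2) by lra.
  assert (Rabs (r x) <= 1) by (apply Rabs_le; lra).
  assert (Rabs (r h - 1) < eps / 2) by (rewrite Rabs_left1; lra).
  pose proof (Rabs_pos (r x)). pose proof (Rabs_pos (r h - 1)). nra.
Qed.

Lemma r_dips_near0 : ~ (forall x, continuous r x) ->
  exists e0, 0 < e0 /\ forall d, 0 < d -> exists t, Rabs t < d /\ r t <= 1 - e0.
Proof.
  intros Hdisc. apply NNPP. intros Hno. apply Hdisc, r_continuous.
  intros e He. apply NNPP. intros Hno'. apply Hno. exists e. split; [exact He|].
  intros d Hd. apply NNPP. intros Hno''. apply Hno'. exists d. split; [exact Hd|].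
  intros h Hh. apply Rnot_le_lt. intros Hle. apply Hno''. now exists h.
Qed.

Definition cluster_value_at0 (v : R) : Prop :=
  forall d e, 0 < d -> 0 < e -> exists t, Rabs t < d /\ Rabs (r t - v) < e.

Definition limit_angle (a : R) : Prop := cluster_value_at0 (cos a).

Lemma limit_angle_0 : limit_angle 0.
Proof.
  intros d e Hd He. exists 0.
  rewrite Rabs_R0, r0, cos_0, Rminus_eq_0, Rabs_R0. auto.
Qed.

Lemma limit_angle_opp a : limit_angle a -> limit_angle (- a).
Proof. unfold limit_angle. now rewrite cos_neg. Qed.

Lemma limit_angle_closed a :
  (forall e, 0 < e -> exists x, limit_angle x /\ Rabs (x - a) < e) -> limit_angle a.
Proof.
  intros Happrox d e Hd He.
  destruct (Happrox (e / 2)) as [x [Gx Hx]]; [lra|].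
  destruct (Gx d (e / 2) Hd) as [t [Ht Hrt]]; [lra|].
  exists t. split; [exact Ht|].
  pose proof (cos_lipschitz x a). pose proof (Rabs_triang (r t - cos x) (cos x - cos a)).
  replace (r t - cos a) with ((r t - cos x) + (cos x - cos a)) by ring. lra.
Qed.

Lemma limit_angle_add a b : limit_angle a -> limit_angle b -> limit_angle (a + b).
Proof.
  intros Ga Gb d e Hd He.
  set (e' := e * e / 9).
  destruct (Ga (d / 2) e') as [s [Hs Hrs]]; [lra|unfold e'; nra|].
  destruct (Gb (d / 2) e') as [t [Ht Hrt]]; [lra|unfold e'; nra|].
  set (x := cos (a + b)).
  (* r(s+t) and r(s-t) are the roots of X^2 - 2 r(s) r(t) X + r(s)^2 + r(t)^2 - 1, and x is a
     root of the same quadratic with cos a, cos b in place of r(s), r(t) *)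
  assert (Hroots : (x - r (s + t)) * (x - r (s - t))
                   = x ^ 2 + (- 2 * r s * r t * x + r s ^ 2 + r t ^ 2) - 1).
  { replace ((x - r (s + t)) * (x - r (s - t)))
      with (x ^ 2 - (r (s + t) + r (s - t)) * x + r (s + t) * r (s - t)) by ring.
    rewrite r_add_sub, r_mul_add_sub. ring. }
  assert (Hx : x ^ 2 + (- 2 * cos a * cos b * x + cos a ^ 2 + cos b ^ 2) - 1 = 0).
  { unfold x. rewrite cos_plus. pose proof (sin2 a). pose proof (sin2 b).
    unfold Rsqr in *. nra. }
  assert (Hsmall : Rabs ((x - r (s + t)) * (x - r (s - t))) < e * e).
  { replace ((x - r (s + t)) * (x - r (s - t)))
      with ((- 2 * r s * r t * x + r s ^ 2 + r t ^ 2)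
            - (- 2 * cos a * cos b * x + cos a ^ 2 + cos b ^ 2)) by lra.
    assert (Hunit : forall y, -1 <= y <= 1 -> Rabs y <= 1) by (intros; apply Rabs_le; lra).
    eapply Rle_lt_trans; [apply quadratic_perturbation with (e := e')|unfold e'; nra];
      try apply Hunit; try apply COS_bound; try apply r_bound; lra. }
  destruct (Rabs_mul_lt_sqr_cases _ _ _ _ He Hsmall) as [Hclose|Hclose];
    [exists (s + t)|exists (s - t)]; (split; [|now rewrite Rabs_minus_sym]).
  - pose proof (Rabs_triang s t). lra.
  - pose proof (Rabs_triang s (- t)). rewrite Rabs_Ropp in *. unfold Rminus. lra.
Qed.

Lemma limit_angle_2PI : limit_angle (2 * PI).
Proof. unfold limit_angle. rewrite cos_2PI, <- cos_0. exact limit_angle_0. Qed.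

Lemma limit_angle_of_seq (t : nat -> R) : (forall k, Rabs (t k) < / (INR k + 1)) ->
  exists b, limit_angle b /\
    forall e, 0 < e -> forall N, exists p, (N <= p)%nat /\ Rabs (acos (r (t p)) - b) < e.
Proof.
  intros Ht.
  destruct (cluster_point_of_bounded (fun k => acos (r (t k))) 0 PI) as [b [_ Hb]].
  { intros k. apply acos_bound. }
  exists b. split; [|exact Hb].
  intros d e Hd He. destruct (inv_succ_small d Hd) as [N HN].
  destruct (Hb e He N) as [p [Hp Hpb]]. exists (t p). split.
  - eapply Rlt_trans; [apply Ht|]. now apply HN.
  - rewrite <- (cos_acos (r (t p))) by apply r_bound.
    eapply Rle_lt_trans; [apply cos_lipschitz|exact Hpb].
Qed.

Lemma limit_angle_nontrivial : ~ (forall x, continuous r x) ->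
  exists a, limit_angle a /\ cos a < 1.
Proof.
  intros Hdisc. destruct (r_dips_near0 Hdisc) as [e0 [He0 Hdip]].
  destruct (choice (fun k t => Rabs t < / (INR k + 1) /\ r t <= 1 - e0)) as [t Ht].
  { intros k. apply Hdip, inv_succ_pos. }
  destruct (limit_angle_of_seq t) as [b [Gb Hb]]; [intros k; apply Ht|].
  exists b. split; [exact Gb|].
  enough (cos b <= 1 - e0) by lra.
  apply Rnot_lt_le. intros Hlt.
  destruct (Hb (cos b - (1 - e0)) ltac:(lra) 0%nat) as [p [_ Hp]].
  pose proof (cos_lipschitz (acos (r (t p))) b) as Hlip.
  rewrite cos_acos in Hlip by apply r_bound.
  destruct (Ht p) as [_ Hrp].
  assert (Habs : Rabs (r (t p) - cos b) < cos b - (1 - e0)) by lra.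
  apply Rabs_def2 in Habs. lra.
Qed.

Lemma limit_angle_div a (n : nat) : limit_angle a -> (1 <= n)%nat ->
  exists b, limit_angle b /\ cos (INR n * b) = cos a.
Proof.
  intros Ga Hn. apply le_INR in Hn. simpl in Hn.
  destruct (choice (fun k t => Rabs t < / (INR k + 1) /\ Rabs (r t - cos a) < / (INR k + 1)))
    as [t Ht].
  { intros k. apply Ga; apply inv_succ_pos. }
  destruct (limit_angle_of_seq (fun k => t k / INR n)) as [b [Gb Hb]].
  { intros k. destruct (Ht k) as [Htk _]. eapply Rle_lt_trans; [|exact Htk].
    unfold Rdiv. rewrite Rabs_mult, Rabs_inv, (Rabs_pos_eq (INR n)) by lra.
    assert (0 < / INR n <= 1) by (split; [apply Rinv_0_lt_compat; lra|
                                          rewrite <- Rinv_1; apply Rinv_le_contravar; lra]).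
    pose proof (Rabs_pos (t k)). nra. }
  exists b. split; [exact Gb|].
  apply Rminus_diag_uniq, Rabs_eq_0, Rle_antisym; [|apply Rabs_pos].
  apply le_epsilon. intros e He. rewrite Rplus_0_l.
  destruct (inv_succ_small (e / 2)) as [N HN]; [lra|].
  destruct (Hb (e / 2 / INR n)) with (N := N) as [p [Hp Hbp]]; [apply Rdiv_lt_0_compat; lra|].
  set (th := acos (r (t p / INR n))) in Hbp.
  assert (Hrt : r (t p) = cos (INR n * th)).
  { rewrite <- (r_chebyshev (t p / INR n) th) by (unfold th; rewrite cos_acos; auto).
    f_equal. field. lra. }
  assert (Hcos : Rabs (cos (INR n * b) - r (t p)) <= e / 2).
  { rewrite Hrt. eapply Rle_trans; [apply cos_lipschitz|].
    replace (INR n * b - INR n * th) with (INR n * - (th - b)) by ring.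
    rewrite Rabs_mult, Rabs_Ropp, (Rabs_pos_eq (INR n)) by lra.
    replace (e / 2) with (INR n * (e / 2 / INR n)) by (field; lra).
    apply Rmult_le_compat_l; lra. }
  destruct (Ht p) as [_ Hrta]. pose proof (HN p Hp).
  pose proof (Rabs_triang (cos (INR n * b) - r (t p)) (r (t p) - cos a)).
  replace (cos (INR n * b) - cos a) with ((cos (INR n * b) - r (t p)) + (r (t p) - cos a))
    by ring.
  lra.
Qed.

Lemma limit_angle_small : (exists a, limit_angle a /\ cos a < 1) ->
  forall gam, 0 < gam -> exists x, limit_angle x /\ 0 < x < gam.
Proof.
  intros [a [Ga Ha]] gam Hgam. apply NNPP. intros Hno.
  pose proof PI_RGT_0.
  destruct (subgroup_cyclic_of_gap limit_angle limit_angle_0 limit_angle_opp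
              limit_angle_add limit_angle_closed gam Hgam) as [g [Hg [Gg Hcyc]]].
  { intros x Gx Px. apply Rnot_lt_le. intros Hlt. apply Hno. now exists x. }
  { exists (2 * PI). split; [exact limit_angle_2PI|lra]. }
  destruct (Hcyc (2 * PI) limit_angle_2PI) as [m Hm]; [lra|].
  assert (Hm1 : (1 <= m)%nat) by (destruct m; [simpl in Hm; lra|lia]).
  (* every limit angle is a multiple of g = 2 PI / m, so multiplying by m kills its cosine *)
  assert (Hmx : forall x, limit_angle x -> cos (INR m * x) = 1).
  { intros x Gx.
    destruct (Hcyc (Rabs x)) as [k Hk];
      [apply (subgroup_abs limit_angle limit_angle_opp), Gx|apply Rabs_pos|].
    rewrite <- cos_Rabs, Rabs_mult, (Rabs_pos_eq (INR m)), Hk by apply pos_INR.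
    replace (INR m * (INR k * g)) with (INR k * (2 * PI)) by (rewrite Hm; ring).
    apply cos_nat_mul_2PI. }
  destruct (limit_angle_div g m Gg Hm1) as [b [Gb Hb]].
  assert (Hg1 : cos g = 1) by (rewrite <- Hb; apply Hmx, Gb).
  assert (Hg2PI : g = 2 * PI).
  { apply le_INR in Hm1. simpl in Hm1.
    apply Rle_antisym; [nra|]. apply Rnot_lt_le. intros Hlt.
    assert (0 < sin (g / 2)) by (apply sin_gt_0; lra).
    pose proof (cos_2a_sin (g / 2)). replace (2 * (g / 2)) with g in * by field. nra. }
  assert (Hm_one : INR m = 1) by (rewrite Hg2PI in Hm; nra).
  pose proof (Hmx a Ga). rewrite Hm_one, Rmult_1_l in *. lra.
Qed.

Lemma limit_angle_nonneg : (exists a, limit_angle a /\ cos a < 1) ->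
  forall b, 0 <= b -> limit_angle b.
Proof.
  intros Hnt.
  apply (subgroup_dense_nonneg limit_angle limit_angle_0 limit_angle_add limit_angle_closed).
  now apply limit_angle_small.
Qed.

Lemma cluster_value_at0_right alpha : (exists a, limit_angle a /\ cos a < 1) ->
  -1 <= alpha <= 1 -> forall d e, 0 < d -> 0 < e ->
  exists t, 0 < t < d /\ Rabs (r t - alpha) < e.
Proof.
  intros Hnt Halpha d e Hd He.
  (* approximate alpha by some alpha' < 1, so that t is forced away from 0 *)
  set (m := Rmin e 1).
  assert (Hm : 0 < m /\ m <= e /\ m <= 1)
    by (unfold m; repeat split; [apply Rmin_glb_lt; lra|apply Rmin_l|apply Rmin_r]).
  set (alpha' := alpha * (1 - m / 2)).
  assert (Halpha' : -1 <= alpha' < 1) by (unfold alpha'; split; nra).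
  assert (Hclose : Rabs (alpha' - alpha) <= e / 2).
  { replace (alpha' - alpha) with (- (m / 2) * alpha) by (unfold alpha'; ring).
    rewrite Rabs_mult, Rabs_Ropp, (Rabs_pos_eq (m / 2)) by lra.
    assert (Rabs alpha <= 1) by (apply Rabs_le; lra). pose proof (Rabs_pos alpha). nra. }
  assert (Hcluster : cluster_value_at0 alpha').
  { rewrite <- (cos_acos alpha') by lra. apply limit_angle_nonneg; [exact Hnt|apply acos_bound]. }
  destruct (Hcluster d (Rmin (e / 2) (1 - alpha'))) as [t [Ht Hrt]];
    [exact Hd|apply Rmin_glb_lt; lra|].
  pose proof (Rmin_l (e / 2) (1 - alpha')). pose proof (Rmin_r (e / 2) (1 - alpha')).
  assert (Ht0 : t <> 0) by (intros ->; rewrite r0, Rabs_pos_eq in Hrt; lra).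
  exists (Rabs t). rewrite r_Rabs. split; [split; [now apply Rabs_pos_lt|exact Ht]|].
  pose proof (Rabs_triang (r t - alpha') (alpha' - alpha)).
  replace (r t - alpha) with ((r t - alpha') + (alpha' - alpha)) by ring. lra.
Qed.

Lemma discontinuous_cosine_pos_null_seq alpha : ~ (forall x, continuous r x) ->
  -1 <= alpha <= 1 ->
  exists t : nat -> R,
    (forall n, 0 < t n) /\ is_lim_seq t 0 /\ is_lim_seq (fun n => r (t n)) alpha.
Proof.
  intros Hdisc Halpha.
  destruct (choice (fun n t => 0 < t < / (INR n + 1) /\ Rabs (r t - alpha) < / (INR n + 1)))
    as [t Ht].
  { intros n. apply cluster_value_at0_right; auto using limit_angle_nontrivial, inv_succ_pos. }
  exists t. split; [intros n; apply Ht|].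
  split; apply is_lim_seq_spec; intros eps;
    destruct (inv_succ_small eps (cond_pos eps)) as [N HN]; exists N; intros n Hn;
    specialize (HN n Hn); destruct (Ht n) as [Htn Hrtn].
  - rewrite Rminus_0_r, Rabs_pos_eq; lra.
  - lra.
Qed.

End BoundedRealCosine.

Theorem proposition3p1 (c : R -> C) :
  cosine_function c ->
  bounded_fun c ->
  ~ (forall x : R, continuous c x) ->
  forall alpha : R, -1 <= alpha <= 1 ->
  exists t : nat -> R,
    (forall n, 0 < t n) /\
    is_lim_seq t 0 /\
    filterlim (fun n => c (t n)) eventually (locally (RtoC alpha)).
Proof.
  intros Hcos Hbd Hdisc alpha Halpha.
  pose proof (bounded_cosine_real c Hcos Hbd) as Hreal.
  set (r := fun t => Re (c t)).
  assert (c_r : forall t, c t = RtoC (r t)).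
  { intros t. unfold r. destruct (Hreal t) as [Him _].
    destruct (c t) as [x y]. simpl in *. now rewrite Him. }
  destruct Hcos as [c0 c_add_sub].
  assert (r0 : r 0 = 1) by (unfold r; now rewrite c0).
  assert (r_add_sub : forall s t, r (s + t) + r (s - t) = 2 * r s * r t).
  { intros s t. pose proof (f_equal Re (c_add_sub s t)) as E.
    rewrite re_plus, (c_r s), (c_r t) in E. simpl in E. unfold r at 1 2. lra. }
  assert (r_disc : ~ (forall x, continuous r x)).
  { intros Hcont. apply Hdisc. intros x.
    apply (filterlim_ext (fun y => RtoC (r y))); [intros y; now rewrite c_r|].
    rewrite c_r. apply filterlim_RtoC; [apply locally_filter|apply Hcont]. }
  destruct (discontinuous_cosine_pos_null_seq r r0 r_add_sub (fun t => proj2 (Hreal t)) alpha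
              r_disc Halpha) as [t [Ht_pos [Ht_lim Hrt_lim]]].
  exists t. split; [exact Ht_pos|]. split; [exact Ht_lim|].
  apply (filterlim_ext (fun n => RtoC (r (t n)))); [intros n; now rewrite c_r|].
  apply filterlim_RtoC; [apply eventually_filter|exact Hrt_lim].
Qed.
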